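(* Let $\ell\in V$ be a nonzero $1$-form, let $i,j\in[n]$ be distinct, and let $L$ be a subspace of $\bigwedge^{k}V$ such that $\ell\wedge y=0$ for all $y\in N_{j\to i}L$. Then $\ell\wedge(e_{i}-e_{j})\wedge x=0$ for all $x\in L$. Moreover, if $L$ is nontrivial (no nonzero $v\in V$ satisfies $v\wedge x=0$ for all $x\in L$), then $\ell\wedge(e_{i}-e_{j})\neq0$.
   Context: $\mathbb{F}$ is a field (assumed throughout the paper, for expository purposes, to have characteristic not $2$), $V$ is an $n$-dimensional $\mathbb{F}$-vector space with a fixed basis $e_1,\dots,e_n$, and $\bigwedge V$ its exterior algebra. For $j\in[n]$, $V^{(j)}$ is the span of $\{e_h:h\neq j\}$. Slow shift: for distinct $i,j\in[n]$ and nonzero $m\in\bigwedge^kV$, write uniquely $m=x+e_j\wedge y$ with $x\in\bigwedge^kV^{(j)}$, $y\in\bigwedge^{k-1}V^{(j)}$, and set $N_{j\to i}m=x+e_i\wedge y$ if this is nonzero, and $N_{j\to i}m=e_j\wedge y$ otherwise (the limit as $t\to0$ of the projective action of the linear map $e_j\mapsto e_i+te_j$ fixing the other $e_h$). For a subspace $L$ of $\bigwedge^kV$, $N_{j\to i}L$ is the span of $\{N_{j\to i}m:m\in L\setminus\{0\}\}$. *)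

From HB Require Import structures.
From mathcomp Require Import all_boot all_order all_algebra.
Set Implicit Arguments. Unset Strict Implicit. Unset Printing Implicit Defensive.
Import Order.TTheory GRing.Theory Num.Theory.
Local Open Scope ring_scope.

(* An element of /\V is represented by its coordinates in the standard basis
   e_S = e_{s1} /\ ... /\ e_{sm} (s1 < ... < sm), indexed by S : {set 'I_n}. *)
Definition ext (F : fieldType) (n : nat) := {ffun {set 'I_n} -> F^o}.

Section Ext.
Variables (F : fieldType) (n : nat).
Local Notation ext := (ext F n).

Definition ebas (S : {set 'I_n}) : ext := [ffun T => (T == S)%:R].

Definition evec (i : 'I_n) : ext := ebas [set i].

Definition ninv (S T : {set 'I_n}) : nat :=
  #|[set p : 'I_n * 'I_n | [&& p.1 \in S, p.2 \in T & (p.2 < p.1)%N]]|.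

Definition wedge_bas (S T : {set 'I_n}) : ext :=
  if [disjoint S & T] then (-1) ^+ ninv S T *: ebas (S :|: T) else 0.

Definition wedge (x y : ext) : ext :=
  \sum_(S : {set 'I_n}) \sum_(T : {set 'I_n}) (x S * y T) *: wedge_bas S T.

Definition is_form (k : nat) (x : ext) : Prop :=
  forall S : {set 'I_n}, x S != 0 -> #|S| = k.

(* decomposition m = x + e_j /\ y with x, y in /\ V^(j) *)
Definition dec_x (j : 'I_n) (m : ext) : ext :=
  [ffun S : {set 'I_n} => if j \in S then 0 else m S].
Definition dec_y (j : 'I_n) (m : ext) : ext :=
  [ffun T : {set 'I_n} => if j \in T then 0
             else (-1) ^+ #|[set t in T | (t < j)%N]| * m (j |: T)].

Definition slow_shift (i j : 'I_n) (m : ext) : ext :=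
  let z := dec_x j m + wedge (evec i) (dec_y j m) in
  if z != 0 then z else wedge (evec j) (dec_y j m).

Definition in_shift_span (i j : 'I_n) (L : {vspace ext}) (y : ext) : Prop :=
  exists (s : seq ext) (c : seq F),
    [/\ size c = size s,
        (forall m, m \in s -> (m \in L) /\ m != 0) &
        y = \sum_(r < size s) c`_r *: slow_shift i j s`_r].

Definition nontrivial (L : {vspace ext}) : Prop :=
  forall v : ext, is_form 1 v -> (forall x, x \in L -> wedge v x = 0) -> v = 0.

End Ext.

From HB Require Import structures.
From mathcomp Require Import all_boot all_order all_algebra sesquilinear.
Import GRing.Theory.
Local Open Scope ring_scope.
Set Implicit Arguments. Unset Strict Implicit.

(* Write m in L as x + e_j /\ y with x, y free of e_j, and let A := x + e_i /\ y,
   so that m = A - (e_i - e_j) /\ y.  Either A = 0 or A = N_{j->i} m, so in both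
   cases l /\ A = 0.  Since 1-forms anticommute and (e_i - e_j) squares to zero,
   l /\ (e_i - e_j) /\ m = - (e_i - e_j) /\ l /\ A = 0.  If l /\ (e_i - e_j) = 0,
   then l /\ m = l /\ A = 0 for every m in L, and nontriviality forces l = 0. *)

Section Wedge.
Variables (F : fieldType) (n : nat).
Local Notation ext := (ext F n).
Local Notation wedge := (@wedge F n).
Implicit Types (u v x y z : ext) (S T U : {set 'I_n}).

Lemma wedge_is_bilinear : bilinear_for
  (GRing.Scale.Law.clone _ _ *:%R _) (GRing.Scale.Law.clone _ _ *:%R _) wedge.
Proof.
split=> [y|x] c u v /=; rewrite /wedge scaler_sumr -big_split; apply: eq_bigr => S _;
  rewrite scaler_sumr -big_split; apply: eq_bigr => T _; rewrite !ffunE /= scalerA -scalerDl.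
  by rewrite mulrDl -scalerAl.
by rewrite mulrDr -scalerAr.
Qed.

HB.instance Definition _ := bilinear_isBilinear.Build F ext ext ext _ _ wedge
  wedge_is_bilinear.

Lemma wedge_sum2 (I J : finType) (f : I -> ext) (g : J -> ext) :
  wedge (\sum_i f i) (\sum_j g j) = \sum_i \sum_j wedge (f i) (g j).
Proof. by rewrite linear_sumlz; apply: eq_bigr => i _; rewrite linear_sumr. Qed.

(* On [F^o], [c *: a] is [c * a] only up to conversion, hence the casts [-[_]/(_ * _)]. *)
Lemma ext_expand x : x = \sum_S x S *: ebas F S.
Proof.
apply/ffunP => T; rewrite sum_ffunE (bigD1 T) //= big1 => [|S nST].
  by rewrite !ffunE eqxx addr0 -[RHS]/(x T * 1) mulr1.
by rewrite !ffunE eq_sym (negbTE nST) -[LHS]/(x S * 0) mulr0.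
Qed.

Lemma wedge_ebasl S y : wedge (ebas F S) y = \sum_T y T *: wedge_bas F S T.
Proof.
rewrite /wedge (bigD1 S) //= [X in _ + X]big1 ?addr0 => [|S' nS'S].
  by apply: eq_bigr => T _; rewrite ffunE eqxx mul1r.
by apply: big1 => T _; rewrite ffunE (negbTE nS'S) mul0r scale0r.
Qed.

Lemma wedge_ebas S T : wedge (ebas F S) (ebas F T) = wedge_bas F S T.
Proof.
rewrite wedge_ebasl (bigD1 T) //= big1 ?addr0 => [|T' nT'T].
  by rewrite ffunE eqxx scale1r.
by rewrite ffunE (negbTE nT'T) scale0r.
Qed.

Lemma ninvE S T : ninv S T = (\sum_(s in S) \sum_(t in T) (t < s))%N.
Proof.
rewrite /ninv -sum1dep_card pair_big_dep /= big_mkcond [RHS]big_mkcond.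
by apply: eq_bigr => -[s t] _ /=; case: (s \in S); case: (t \in T).
Qed.

Lemma sumn_setU (I : finType) (A B : {set I}) (f : I -> nat) : [disjoint A & B] ->
  (\sum_(i in A :|: B) f i = \sum_(i in A) f i + \sum_(i in B) f i)%N.
Proof. by move=> dAB; rewrite -bigU //; apply: eq_bigl => i; rewrite !inE. Qed.

Lemma ninvUl S T U : [disjoint S & T] -> ninv (S :|: T) U = (ninv S U + ninv T U)%N.
Proof. by move=> dST; rewrite !ninvE sumn_setU. Qed.

Lemma ninvUr S T U : [disjoint T & U] -> ninv S (T :|: U) = (ninv S T + ninv S U)%N.
Proof. by move=> dTU; rewrite !ninvE -big_split; apply: eq_bigr => s _; rewrite sumn_setU. Qed.

Lemma ninv_set1l (a : 'I_n) T : ninv [set a] T = #|[set t in T | (t < a)%N]|.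
Proof.
rewrite ninvE big_set1 -sum1dep_card big_mkcondr /=.
by apply: eq_bigr => t _; case: (t < a)%N.
Qed.

Lemma ninv_set1 (a b : 'I_n) : ninv [set a] [set b] = (b < a)%N.
Proof. by rewrite ninvE !big_set1. Qed.

Lemma disjoint_setUl S T U :
  [disjoint S :|: T & U] = [disjoint S & U] && [disjoint T & U].
Proof. by rewrite -!setI_eq0 setIUl setU_eq0. Qed.

Lemma disjoint_setUr S T U :
  [disjoint S & T :|: U] = [disjoint S & T] && [disjoint S & U].
Proof. by rewrite -!setI_eq0 setIUr setU_eq0. Qed.

Lemma wedge_basA S T U :
  wedge (wedge_bas F S T) (ebas F U) = wedge (ebas F S) (wedge_bas F T U).
Proof.
rewrite /wedge_bas; case dST: [disjoint S & T]; case dTU: [disjoint T & U];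
  rewrite ?linear0l ?linear0r ?linearZl ?linearZr //= !wedge_ebas /wedge_bas
    ?disjoint_setUl ?disjoint_setUr ?dST ?dTU ?andbF ?scaler0 //=.
case: [disjoint S & U]; rewrite ?scaler0 // !scalerA -!exprD setUA.
by rewrite ninvUl // ninvUr // addnA addnC.
Qed.

Lemma wedgeA_ebas S y U :
  wedge (wedge (ebas F S) y) (ebas F U) = wedge (ebas F S) (wedge y (ebas F U)).
Proof.
rewrite [y]ext_expand linear_sumr 2!linear_sumlz linear_sumr; apply: eq_bigr => T _.
by rewrite linearZr linearZl linearZl linearZr /= !wedge_ebas wedge_basA.
Qed.

Lemma wedgeA_ebasl S y z :
  wedge (wedge (ebas F S) y) z = wedge (ebas F S) (wedge y z).
Proof.
rewrite [z]ext_expand linear_sumr [wedge y _]linear_sumr linear_sumr; apply: eq_bigr => U _.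
by rewrite !linearZr /= wedgeA_ebas.
Qed.

Lemma wedgeA x y z : wedge (wedge x y) z = wedge x (wedge y z).
Proof.
rewrite [x]ext_expand [wedge _ y]linear_sumlz 2!linear_sumlz; apply: eq_bigr => S _.
by rewrite !linearZl /= wedgeA_ebasl.
Qed.

Lemma wedge_evecE (a : 'I_n) z S :
  wedge (evec F a) z S =
  if a \in S then (-1) ^+ #|[set t in S :\ a | (t < a)%N]| * z (S :\ a) else 0.
Proof.
have termE T : (z T *: wedge_bas F [set a] T) S =
    if (a \notin T) && (S == a |: T) then (-1) ^+ ninv [set a] T * z T else 0.
  rewrite /wedge_bas disjoints1; case: (a \in T) => /=; first by rewrite scaler0 ffunE.
  rewrite !ffunE; case: (S == a |: T) => /=; last by rewrite !scaler0.
  by rewrite scalerA mulrC; exact: mulr1.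
rewrite /evec wedge_ebasl sum_ffunE; under eq_bigr => T _ do rewrite termE.
case: ifP => aS.
  rewrite (bigD1 (S :\ a)) //= big1 ?addr0 => [|T nT].
    by rewrite setD11 setD1K // eqxx ninv_set1l.
  by case: ifP => // /andP [aT /eqP eS]; rewrite eS setU1K ?eqxx in nT.
by apply: big1 => T _; case: ifP => // /andP [_ /eqP eS]; rewrite eS setU11 in aS.
Qed.

Lemma dec_xyE (j : 'I_n) m : m = dec_x j m + wedge (evec F j) (dec_y j m).
Proof.
apply/ffunP => S; rewrite ffunE wedge_evecE !ffunE.
case: ifP => jS; last by rewrite addr0.
by rewrite add0r !inE eqxx /= setD1K // mulrA -expr2 sqrr_sign mul1r.
Qed.

Lemma wedge_evecC (a b : 'I_n) :
  wedge (evec F a) (evec F b) = - wedge (evec F b) (evec F a).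
Proof.
rewrite !wedge_ebas /wedge_bas !disjoints1 !inE.
case: (eqVneq a b) => [->|neq_ab]; first by rewrite oppr0.
rewrite /= setUC !ninv_set1 -scaleNr; congr (_ *: _).
by case: ltngtP neq_ab => [_ _|_ _|/val_inj ->]; rewrite ?eqxx //= opprK.
Qed.

Lemma wedge_evecxx (a : 'I_n) : wedge (evec F a) (evec F a) = 0.
Proof. by rewrite wedge_ebas /wedge_bas disjoints1 inE eqxx. Qed.

Lemma wedge_evecBxx (a b : 'I_n) :
  wedge (evec F a - evec F b) (evec F a - evec F b) = 0.
Proof.
by rewrite linearBl !linearBr /= !wedge_evecxx (wedge_evecC b a) sub0r subr0 subrr.
Qed.

Lemma form1_expand v : is_form 1 v -> v = \sum_(a : 'I_n) v [set a] *: evec F a.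
Proof.
move=> v1; apply/ffunP => T; rewrite sum_ffunE.
have [/cards1P [b ->] | nT1] := boolP (#|T| == 1%N).
  rewrite (bigD1 b) //= big1 => [|a nab]; rewrite !ffunE.
    by rewrite eqxx addr0 -[RHS]/(_ * 1) mulr1.
  by rewrite (inj_eq set1_inj) eq_sym (negbTE nab) -[LHS]/(_ * 0) mulr0.
have -> : v T = 0 by apply/eqP; apply: contraNT nT1 => /v1 ->.
rewrite big1 // => a _; rewrite !ffunE.
have /negbTE -> : T != [set a] by apply: contraNneq nT1 => ->; rewrite cards1.
by rewrite -[LHS]/(_ * 0) mulr0.
Qed.

Lemma wedge_form1C u v : is_form 1 u -> is_form 1 v -> wedge u v = - wedge v u.
Proof.
move=> /form1_expand -> /form1_expand ->; rewrite !wedge_sum2 exchange_big /= -sumrN.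
apply: eq_bigr => a _; rewrite -sumrN; apply: eq_bigr => b _.
by rewrite !linearZl !linearZr /= wedge_evecC !scalerN !scalerA mulrC.
Qed.

Lemma is_form1_evec (a : 'I_n) : is_form 1 (evec F a).
Proof.
move=> S; rewrite ffunE; have [-> _|nSa] := eqVneq S [set a]; first exact: cards1.
by rewrite eqxx.
Qed.

Lemma is_formB k u v : is_form k u -> is_form k v -> is_form k (u - v).
Proof.
move=> uk vk S; rewrite !ffunE; have [u0|/uk //] := eqVneq (u S) 0.
by rewrite u0 sub0r oppr_eq0 => /vk.
Qed.
End Wedge.

Section SlowShift.
Variables (F : fieldType) (n : nat) (i j : 'I_n).
Local Notation ext := (ext F n).
Implicit Types (l m : ext) (L : {vspace ext}).

Definition shift_part m : ext := dec_x j m + wedge (evec F i) (dec_y j m).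

Lemma shift_partE m : m = shift_part m - wedge (evec F i - evec F j) (dec_y j m).
Proof. by rewrite linearBl /= opprB addrCA addrK addrC -dec_xyE. Qed.

Lemma shift_part0 : shift_part 0 = 0.
Proof.
rewrite /shift_part.
have -> : dec_x j (0 : ext) = 0 by apply/ffunP => S; rewrite !ffunE if_same.
have -> : dec_y j (0 : ext) = 0 by apply/ffunP => S; rewrite !ffunE mulr0 if_same.
by rewrite linear0r addr0.
Qed.

Lemma shift_part_in_shift_span L m : m \in L -> shift_part m != 0 ->
  in_shift_span i j L (shift_part m).
Proof.
move=> mL sm0; exists [:: m], [:: 1]; split=> // [m' | ].
  rewrite inE => /eqP ->; split=> //.
  by apply: contra_neq sm0 => ->; rewrite shift_part0.
by rewrite big_ord1 scale1r /slow_shift -/(shift_part m) sm0.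
Qed.

Lemma wedge_shift_part l L m :
  (forall y, in_shift_span i j L y -> wedge l y = 0) -> m \in L ->
  wedge l (shift_part m) = 0.
Proof.
move=> lN0 mL; have [->|sm0] := eqVneq (shift_part m) 0; first exact: linear0r.
exact/lN0/shift_part_in_shift_span.
Qed.
End SlowShift.

Theorem lemma5p4 (F : fieldType) (n k : nat) (l : ext F n) (i j : 'I_n)
    (L : {vspace ext F n}) :
  2%:R != 0 :> F ->
  is_form 1 l -> l != 0 -> i != j ->
  (forall x, x \in L -> is_form k x) ->
  (forall y, in_shift_span i j L y -> wedge l y = 0) ->
  (forall x, x \in L -> wedge (wedge l (evec F i - evec F j)) x = 0) /\
  (nontrivial L -> wedge l (evec F i - evec F j) != 0).
Proof.
move=> _ l1 l_neq0 _ _ lN0; set w := evec F i - evec F j.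
have w1 : is_form 1 w by apply: is_formB; apply: is_form1_evec.
split=> [m mL | L_nontriv].
  have lw_shift : wedge (wedge l w) (shift_part i j m) = 0.
    by rewrite (wedge_form1C l1 w1) linearNl /= wedgeA (wedge_shift_part lN0 mL) linear0r oppr0.
  have lw_w y : wedge (wedge l w) (wedge w y) = 0.
    by rewrite wedgeA -(wedgeA w) wedge_evecBxx linear0l linear0r.
  by rewrite (shift_partE i j m) -/w linearBr /= lw_shift lw_w subrr.
apply: contra_neq l_neq0 => lw0; apply: L_nontriv l1 _ => m mL.
rewrite (shift_partE i j m) -/w linearBr /= (wedge_shift_part lN0 mL).
by rewrite -wedgeA lw0 linear0l subrr.
Qed.
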